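(* Let $p\in\Delta_7$ have at least one vanishing entry. Then $p\in\operatorname{RBM}_{3,2}$ if and only if for every state $x\in\{0,1\}^3$ with $p_x=0$ there is a Hamming neighbour $y$ of $x$ with $p_y=0$.
   Context: A distribution of three binary random variables is a $2\times2\times2$ tensor $p=(p_x)_{x\in\{0,1\}^3}$ with nonnegative entries summing to $1$; the set of these is $\Delta_7$. Two states are Hamming neighbours if they differ in exactly one coordinate. For $a,b,c\in\mathbb{R}^2_{\ge0}$, $a\otimes b\otimes c$ is the tensor with entries $a_ib_jc_k$. $\operatorname{RBM}_{3,2}$ is the set of $p\in\Delta_7$ of the form $p=(a_1\otimes b_1\otimes c_1+d_1\otimes e_1\otimes f_1)*(a_2\otimes b_2\otimes c_2+d_2\otimes e_2\otimes f_2)$ with all vectors in $\mathbb{R}^2_{\ge0}$, where $*$ is the entrywise (Hadamard) product. *)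

From Stdlib Require Import Reals.
Open Scope R_scope.

(* States of three binary variables: triples of booleans (false = 0, true = 1). *)
Definition state : Type := (bool * bool * bool)%type.

Definition tensor : Type := state -> R.

(* Vectors in R^2 are functions bool -> R (index false = 1st, true = 2nd entry). *)
Definition vec2 : Type := bool -> R.
Definition nonneg2 (a : vec2) : Prop := 0 <= a false /\ 0 <= a true.

Definition in_simplex (p : tensor) : Prop :=
  (forall x : state, 0 <= p x) /\
  p (false,false,false) + p (false,false,true) + p (false,true,false)
  + p (false,true,true) + p (true,false,false) + p (true,false,true)
  + p (true,true,false) + p (true,true,true) = 1.

Definition outer3 (a b c : vec2) : tensor :=
  fun x => let '(i, j, k) := x in a i * b j * c k.

Definition in_RBM32 (p : tensor) : Prop :=
  in_simplex p /\
  exists a1 b1 c1 d1 e1 f1 a2 b2 c2 d2 e2 f2 : vec2,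
    nonneg2 a1 /\ nonneg2 b1 /\ nonneg2 c1 /\ nonneg2 d1 /\ nonneg2 e1 /\ nonneg2 f1 /\
    nonneg2 a2 /\ nonneg2 b2 /\ nonneg2 c2 /\ nonneg2 d2 /\ nonneg2 e2 /\ nonneg2 f2 /\
    forall x : state,
      p x = (outer3 a1 b1 c1 x + outer3 d1 e1 f1 x) * (outer3 a2 b2 c2 x + outer3 d2 e2 f2 x).

Definition hamming_neighbour (x y : state) : Prop :=
  let '(x1, x2, x3) := x in
  let '(y1, y2, y3) := y in
  (y1 = negb x1 /\ y2 = x2 /\ y3 = x3) \/
  (y1 = x1 /\ y2 = negb x2 /\ y3 = x3) \/
  (y1 = x1 /\ y2 = x2 /\ y3 = negb x3).

(* Necessity: a factor of the Hadamard product is a sum of two nonnegative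
   rank-one tensors; if it vanishes at x, each summand has a vanishing entry in
   some coordinate, and flipping x in a third coordinate keeps both zero.
   Sufficiency: composing with a symmetry of the cube, p vanishes on the edge
   {000, 001}. Then p is the Hadamard product of explicit rank-two tensors
   supported away from that edge, built slice by slice in the last coordinate;
   the neighbour condition at 11k is exactly what makes each slice factor. *)

From Stdlib Require Import Reals Lra.
Open Scope R_scope.

Definition nonneg_rank_two (t : tensor) : Prop :=
  exists a b c d e f : vec2,
    nonneg2 a /\ nonneg2 b /\ nonneg2 c /\ nonneg2 d /\ nonneg2 e /\ nonneg2 f /\
    forall x : state, t x = outer3 a b c x + outer3 d e f x.

Definition hadamard_of_rank_two (p : tensor) : Prop :=
  exists t1 t2 : tensor,
    nonneg_rank_two t1 /\ nonneg_rank_two t2 /\ forall x : state, p x = t1 x * t2 x.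

Definition zeros_have_zero_neighbour (p : tensor) : Prop :=
  forall x : state, p x = 0 -> exists y : state, hamming_neighbour x y /\ p y = 0.

Lemma nonneg_rank_two_intro (a b c d e f : vec2) :
  nonneg2 a -> nonneg2 b -> nonneg2 c -> nonneg2 d -> nonneg2 e -> nonneg2 f ->
  nonneg_rank_two (fun x => outer3 a b c x + outer3 d e f x).
Proof. intros; exists a, b, c, d, e, f; repeat (split; [assumption|]); reflexivity. Qed.

Lemma in_RBM32_iff (p : tensor) :
  in_RBM32 p <-> in_simplex p /\ hadamard_of_rank_two p.
Proof.
  split; intros [Hs H]; split; try exact Hs.
  - destruct H as (a1 & b1 & c1 & d1 & e1 & f1 & a2 & b2 & c2 & d2 & e2 & f2 &
                   Ha1 & Hb1 & Hc1 & Hd1 & He1 & Hf1 &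
                   Ha2 & Hb2 & Hc2 & Hd2 & He2 & Hf2 & Hp).
    exists (fun x => outer3 a1 b1 c1 x + outer3 d1 e1 f1 x),
           (fun x => outer3 a2 b2 c2 x + outer3 d2 e2 f2 x).
    split; [|split]; [| | exact Hp].
    + apply nonneg_rank_two_intro; assumption.
    + apply nonneg_rank_two_intro; assumption.
  - destruct H as (t1 & t2 &
                   (a1 & b1 & c1 & d1 & e1 & f1 & Ha1 & Hb1 & Hc1 & Hd1 & He1 & Hf1 & H1) &
                   (a2 & b2 & c2 & d2 & e2 & f2 & Ha2 & Hb2 & Hc2 & Hd2 & He2 & Hf2 & H2) & Hp).
    exists a1, b1, c1, d1, e1, f1, a2, b2, c2, d2, e2, f2.
    repeat (split; [assumption|]).
    intro x; rewrite Hp, H1, H2; reflexivity.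
Qed.

Lemma nonneg2_entry (a : vec2) (i : bool) : nonneg2 a -> 0 <= a i.
Proof. intros [H0 H1]; destruct i; assumption. Qed.

Lemma outer3_nonneg (a b c : vec2) (x : state) :
  nonneg2 a -> nonneg2 b -> nonneg2 c -> 0 <= outer3 a b c x.
Proof.
  destruct x as [[i j] k]; intros Ha Hb Hc; simpl.
  repeat apply Rmult_le_pos; apply nonneg2_entry; assumption.
Qed.

Lemma outer3_eq0 (a b c : vec2) (i j k : bool) :
  outer3 a b c (i, j, k) = 0 -> a i = 0 \/ b j = 0 \/ c k = 0.
Proof.
  simpl; intro H.
  destruct (Rmult_integral _ _ H) as [H' | H']; [|tauto].
  destruct (Rmult_integral _ _ H'); tauto.
Qed.

Lemma nonneg_rank_two_zero_neighbour (t : tensor) (x : state) :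
  nonneg_rank_two t -> t x = 0 -> exists y : state, hamming_neighbour x y /\ t y = 0.
Proof.
  intros (a & b & c & d & e & f & Ha & Hb & Hc & Hd & He & Hf & Ht) Hx.
  destruct x as [[i j] k].
  rewrite Ht in Hx.
  pose proof (outer3_nonneg a b c (i, j, k) Ha Hb Hc).
  pose proof (outer3_nonneg d e f (i, j, k) Hd He Hf).
  assert (Z1 : outer3 a b c (i, j, k) = 0) by lra.
  assert (Z2 : outer3 d e f (i, j, k) = 0) by lra.
  apply outer3_eq0 in Z1; apply outer3_eq0 in Z2.
  destruct Z1 as [Z1 | [Z1 | Z1]], Z2 as [Z2 | [Z2 | Z2]];
  first [ exists (negb i, j, k); split; [simpl; tauto | rewrite Ht; simpl; rewrite Z1, Z2; ring]
        | exists (i, negb j, k); split; [simpl; tauto | rewrite Ht; simpl; rewrite Z1, Z2; ring]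
        | exists (i, j, negb k); split; [simpl; tauto | rewrite Ht; simpl; rewrite Z1, Z2; ring] ].
Qed.

Lemma hadamard_zero_neighbour (p : tensor) :
  hadamard_of_rank_two p -> zeros_have_zero_neighbour p.
Proof.
  intros (t1 & t2 & H1 & H2 & Hp) x Hx.
  rewrite Hp in Hx.
  destruct (Rmult_integral _ _ Hx) as [Z | Z].
  - destruct (nonneg_rank_two_zero_neighbour t1 x H1 Z) as [y [Hxy Hy]].
    exists y; split; [exact Hxy | rewrite Hp, Hy; ring].
  - destruct (nonneg_rank_two_zero_neighbour t2 x H2 Z) as [y [Hxy Hy]].
    exists y; split; [exact Hxy | rewrite Hp, Hy; ring].
Qed.

Definition pair2 (u v : R) : vec2 := fun b => if b then v else u.

Lemma nonneg2_pair2 (u v : R) : 0 <= u -> 0 <= v -> nonneg2 (pair2 u v).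
Proof. intros; split; assumption. Qed.

(* The slice [[0, u], [v, w]] is the Hadamard product of [[0, f], [c, c]] and [[0, c'], [f', c']]. *)
Lemma hadamard_split_2x2 (u v w : R) :
  0 <= u -> 0 <= v -> 0 <= w -> (w = 0 -> u = 0 \/ v = 0) ->
  exists c c' f f', 0 <= c /\ 0 <= c' /\ 0 <= f /\ 0 <= f' /\
    f * c' = u /\ c * f' = v /\ c * c' = w.
Proof.
  intros Hu Hv [Hw | Hw] H.
  - exists w, 1, u, (v / w). repeat split; try lra.
    + apply Rmult_le_pos; [lra | left; apply Rinv_0_lt_compat; lra].
    + field; lra.
  - destruct (H (eq_sym Hw)) as [H0 | H0].
    + exists 1, 0, 0, v. repeat split; lra.
    + exists 0, 1, u, 0. repeat split; lra.
Qed.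

Section ZeroEdge.

Variable p : tensor.
Hypothesis p_nonneg : forall x : state, 0 <= p x.
Hypothesis p000 : p (false, false, false) = 0.
Hypothesis p001 : p (false, false, true) = 0.

Lemma hadamard_zero_edge_generic :
  (forall k : bool, p (true, true, k) = 0 -> p (false, true, k) = 0 \/ p (true, false, k) = 0) ->
  hadamard_of_rank_two p.
Proof.
  intro Htop.
  destruct (hadamard_split_2x2 _ _ _ (p_nonneg (false, true, false))
              (p_nonneg (true, false, false)) (p_nonneg (true, true, false)) (Htop false))
    as (c0 & c0' & f0 & f0' & ? & ? & ? & ? & E01 & E10 & E11).
  destruct (hadamard_split_2x2 _ _ _ (p_nonneg (false, true, true))
              (p_nonneg (true, false, true)) (p_nonneg (true, true, true)) (Htop true))
    as (c1 & c1' & f1 & f1' & ? & ? & ? & ? & F01 & F10 & F11).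
  exists (fun x => outer3 (pair2 0 1) (pair2 1 1) (pair2 c0 c1) x
                 + outer3 (pair2 1 0) (pair2 0 1) (pair2 f0 f1) x),
         (fun x => outer3 (pair2 1 1) (pair2 0 1) (pair2 c0' c1') x
                 + outer3 (pair2 0 1) (pair2 1 0) (pair2 f0' f1') x).
  split; [|split].
  - apply nonneg_rank_two_intro; apply nonneg2_pair2; lra.
  - apply nonneg_rank_two_intro; apply nonneg2_pair2; lra.
  - intros [[[|] [|]] [|]]; simpl;
    first [ rewrite <- E01 | rewrite <- E10 | rewrite <- E11
          | rewrite <- F01 | rewrite <- F10 | rewrite <- F11
          | rewrite p000 | rewrite p001 ]; ring.
Qed.

Lemma hadamard_zero_edge_degenerate :
  p (true, true, false) = 0 -> p (true, true, true) = 0 -> hadamard_of_rank_two p.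
Proof.
  intros p110 p111.
  exists (fun x => outer3 (pair2 1 0) (pair2 0 1)
                          (pair2 (p (false, true, false)) (p (false, true, true))) x
                 + outer3 (pair2 0 1) (pair2 1 0)
                          (pair2 (p (true, false, false)) (p (true, false, true))) x),
         (fun x => outer3 (pair2 1 1) (pair2 1 1) (pair2 1 1) x
                 + outer3 (pair2 0 0) (pair2 0 0) (pair2 0 0) x).
  split; [|split].
  - apply nonneg_rank_two_intro; apply nonneg2_pair2; try lra; apply p_nonneg.
  - apply nonneg_rank_two_intro; apply nonneg2_pair2; lra.
  - intros [[[|] [|]] [|]]; simpl;
    first [ rewrite p000 | rewrite p001 | rewrite p110 | rewrite p111 | idtac ]; ring.
Qed.

Lemma zero_top_neighbour (k : bool) :
  zeros_have_zero_neighbour p -> p (true, true, k) = 0 -> p (true, true, negb k) <> 0 ->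
  p (false, true, k) = 0 \/ p (true, false, k) = 0.
Proof.
  intros Hc Hz Hnz.
  destruct (Hc _ Hz) as [[[i j] l] [Hn Hy]].
  destruct k, i, j, l; simpl in *; intuition discriminate.
Qed.

Lemma hadamard_zero_edge :
  zeros_have_zero_neighbour p -> hadamard_of_rank_two p.
Proof.
  intro Hc.
  destruct (Req_dec (p (true, true, false)) 0) as [z0 | z0],
           (Req_dec (p (true, true, true)) 0) as [z1 | z1].
  - exact (hadamard_zero_edge_degenerate z0 z1).
  - apply hadamard_zero_edge_generic; intros [|] Hz;
      [contradiction | exact (zero_top_neighbour false Hc z0 z1)].
  - apply hadamard_zero_edge_generic; intros [|] Hz;
      [exact (zero_top_neighbour true Hc z1 z0) | contradiction].
  - apply hadamard_zero_edge_generic; intros [|] Hz; contradiction.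
Qed.

End ZeroEdge.

Definition translate (t x : state) : state :=
  let '(t1, t2, t3) := t in let '(i, j, k) := x in (xorb i t1, xorb j t2, xorb k t3).

Definition rotate (x : state) : state := let '(i, j, k) := x in (j, k, i).

Lemma zeros_have_zero_neighbour_comp (g : state -> state) (p : tensor) :
  (forall y : state, exists x, g x = y) ->
  (forall x y : state, hamming_neighbour (g x) (g y) -> hamming_neighbour x y) ->
  zeros_have_zero_neighbour p -> zeros_have_zero_neighbour (fun x => p (g x)).
Proof.
  intros Hsurj Hrefl Hc x Hx.
  destruct (Hc _ Hx) as [y [Hn Hy]].
  destruct (Hsurj y) as [x' <-].
  exists x'; split; [apply Hrefl; exact Hn | exact Hy].
Qed.

Lemma hadamard_of_rank_two_comp (g : state -> state) (q p : tensor) :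
  (forall t : tensor, nonneg_rank_two t -> nonneg_rank_two (fun x => t (g x))) ->
  hadamard_of_rank_two q -> (forall x : state, p x = q (g x)) -> hadamard_of_rank_two p.
Proof.
  intros Hg (t1 & t2 & H1 & H2 & Hq) Hp.
  exists (fun x => t1 (g x)), (fun x => t2 (g x)).
  split; [apply Hg; exact H1 | split; [apply Hg; exact H2 |]].
  intro x; rewrite Hp; apply Hq.
Qed.

Lemma nonneg_rank_two_translate (s : state) (t : tensor) :
  nonneg_rank_two t -> nonneg_rank_two (fun x => t (translate s x)).
Proof.
  destruct s as [[s1 s2] s3].
  intros (a & b & c & d & e & f & Ha & Hb & Hc & Hd & He & Hf & Ht).
  exists (fun i => a (xorb i s1)), (fun j => b (xorb j s2)), (fun k => c (xorb k s3)),
         (fun i => d (xorb i s1)), (fun j => e (xorb j s2)), (fun k => f (xorb k s3)).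
  repeat split; try (apply nonneg2_entry; assumption).
  intros [[i j] k]; apply Ht.
Qed.

Lemma nonneg_rank_two_rotate (t : tensor) :
  nonneg_rank_two t -> nonneg_rank_two (fun x => t (rotate x)).
Proof.
  intros (a & b & c & d & e & f & Ha & Hb & Hc & Hd & He & Hf & Ht).
  exists c, a, b, f, d, e; repeat (split; [assumption|]).
  intros [[i j] k]; rewrite Ht; simpl; ring.
Qed.

Lemma translate_involutive (s x : state) : translate s (translate s x) = x.
Proof.
  destruct s as [[[|] [|]] [|]], x as [[[|] [|]] [|]]; reflexivity.
Qed.

Lemma rotate_cube (x : state) : rotate (rotate (rotate x)) = x.
Proof. destruct x as [[i j] k]; reflexivity. Qed.

Lemma hamming_neighbour_translate (s x y : state) :
  hamming_neighbour (translate s x) (translate s y) -> hamming_neighbour x y.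
Proof.
  destruct s as [[[|] [|]] [|]], x as [[[|] [|]] [|]], y as [[[|] [|]] [|]];
    simpl; intuition discriminate.
Qed.

Lemma hamming_neighbour_rotate (x y : state) :
  hamming_neighbour (rotate x) (rotate y) -> hamming_neighbour x y.
Proof.
  destruct x as [[i j] k], y as [[i' j'] k']; simpl; tauto.
Qed.

Lemma zeros_have_zero_neighbour_translate (s : state) (p : tensor) :
  zeros_have_zero_neighbour p -> zeros_have_zero_neighbour (fun x => p (translate s x)).
Proof.
  apply zeros_have_zero_neighbour_comp.
  - intro y; exists (translate s y); apply translate_involutive.
  - apply hamming_neighbour_translate.
Qed.

Lemma zeros_have_zero_neighbour_rotate (p : tensor) :
  zeros_have_zero_neighbour p -> zeros_have_zero_neighbour (fun x => p (rotate x)).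
Proof.
  apply zeros_have_zero_neighbour_comp.
  - intro y; exists (rotate (rotate y)); apply rotate_cube.
  - apply hamming_neighbour_rotate.
Qed.

(* Rotating once or twice turns an edge along the second or first coordinate
   into one along the third. *)
Lemma hadamard_of_zero_at_origin (q : tensor) :
  (forall x : state, 0 <= q x) -> zeros_have_zero_neighbour q ->
  q (false, false, false) = 0 -> hadamard_of_rank_two q.
Proof.
  intros Hn Hc Z.
  destruct (Hc _ Z) as [[[[|] [|]] [|]] [Hnb Hy]]; simpl in Hnb; try (intuition discriminate).
  - apply (hadamard_of_rank_two_comp rotate (fun x => q (rotate (rotate x))));
      [exact nonneg_rank_two_rotate | | intro; rewrite rotate_cube; reflexivity].
    apply hadamard_zero_edge; auto.
    apply (zeros_have_zero_neighbour_rotate (fun x => q (rotate x))).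
    apply zeros_have_zero_neighbour_rotate; exact Hc.
  - apply (hadamard_of_rank_two_comp (fun x => rotate (rotate x)) (fun x => q (rotate x)));
      [intros t Ht; apply (nonneg_rank_two_rotate (fun x => t (rotate x))),
         nonneg_rank_two_rotate, Ht
      | | intro; rewrite rotate_cube; reflexivity].
    apply hadamard_zero_edge; auto.
    apply zeros_have_zero_neighbour_rotate; exact Hc.
  - apply hadamard_zero_edge; assumption.
Qed.

Lemma hadamard_of_zero (p : tensor) (x0 : state) :
  (forall x : state, 0 <= p x) -> zeros_have_zero_neighbour p -> p x0 = 0 ->
  hadamard_of_rank_two p.
Proof.
  intros Hn Hc Hx0.
  apply (hadamard_of_rank_two_comp (translate x0) (fun x => p (translate x0 x)));
    [exact (nonneg_rank_two_translate x0) | | intro; rewrite translate_involutive; reflexivity].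
  apply hadamard_of_zero_at_origin; auto.
  - apply zeros_have_zero_neighbour_translate; exact Hc.
  - rewrite <- Hx0; destruct x0 as [[[|] [|]] [|]]; reflexivity.
Qed.

Theorem mainTheorem8 (p : tensor) :
  in_simplex p ->
  (exists x : state, p x = 0) ->
  (in_RBM32 p <->
   forall x : state, p x = 0 -> exists y : state, hamming_neighbour x y /\ p y = 0).
Proof.
  intros Hs [x0 Hx0].
  rewrite in_RBM32_iff.
  split.
  - intros [_ H]. exact (hadamard_zero_neighbour p H).
  - intro Hc. split; [exact Hs|].
    exact (hadamard_of_zero p x0 (proj1 Hs) Hc Hx0).
Qed.
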